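(* Let the polynomials $H_m(z)$ be defined by the generating function \[ \sum_{m=0}^{\infty}H_m(z)t^m=\frac{1}{1+t^2+zt^3}. \] Then for every $m$ the zeros of $H_m(z)$ are real, and the set $\bigcup_{m=0}^{\infty}\mathcal{Z}(H_m)$ is dense in $(-\infty,\infty)$.
   Context: $\mathcal{Z}(H_m)$ denotes the set of zeros of $H_m(z)$. Convention: the zeros of the constant zero polynomial are considered real. *)

From mathcomp Require Import all_boot all_order all_algebra all_field.
From mathcomp Require Import reals.
Set Implicit Arguments. Unset Strict Implicit. Unset Printing Implicit Defensive.
Import Order.TTheory GRing.Theory Num.Theory.
Local Open Scope ring_scope.

(* Coefficient of t^i in 1 + t^2 + z t^3, as a polynomial in z (z = 'X). *)
Definition gdenom_coef (i : nat) : {poly int} :=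
  if i == 0%N then 1 else if i == 2%N then 1 else if i == 3%N then 'X else 0.

(* H : nat -> {poly int} satisfies  sum_m H_m t^m = 1/(1+t^2+z t^3)  as a formal
   power series in t, i.e. (1+t^2+z t^3) * sum_m H_m t^m = 1, coefficientwise. *)
Definition is_Hgen (H : nat -> {poly int}) : Prop :=
  forall n : nat,
    \sum_(i < n.+1) gdenom_coef i * H (n - i)%N = (n == 0%N)%:R.

(* Z(p) consists of real numbers; convention: zeros of the zero polynomial are real. *)
Definition zeros_real (p : {poly int}) : Prop :=
  p = 0 \/ forall z : algC, root (map_poly intr p) z -> z \is Num.real.

From mathcomp Require Import all_boot all_order all_algebra all_field.
From mathcomp Require Import reals Rstruct trigo polyrcf.
From mathcomp Require Import ring lra zify.
Import Order.TTheory GRing.Theory Num.Theory.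
Local Open Scope ring_scope.

(* The generating function gives the recurrence
   H (k+3) = - H (k+1) - z H k.  Substitute z = zeta (cos f), where
   zeta y = 2 y (1 - 4 y^2)^(-3/2) and pi/3 < f < 2 pi/3.  Then the characteristic
   polynomial l^3 + l + z has one real root r and the two roots rho e^(+-if),
   with |r| < rho, so H m (z) has a closed form.  At the angles f = pi j/(m+2)
   that closed form shows that the sign of H m (z) is (-1)^(j+1).  Since
   zeta (cos f) decreases from +oo to -oo on (pi/3, 2 pi/3), consecutive
   angles bracket a real zero of H m.  Let d be the degree of H m.  Then
   3 d <= m and d = m (mod 2), so d + 1 of these angles fit into
   (pi/3, 2 pi/3), and the zeros found this way are all the zeros of H m.
   As m grows, the angles become dense, and so do the zeros. *)

Section Recurrence.
Context {H : nat -> {poly int}} (hH : is_Hgen H).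

Lemma Hgen0 : H 0 = 1.
Proof. by have := hH 0; rewrite big_ord1 /gdenom_coef mul1r. Qed.

Lemma Hgen1 : H 1 = 0.
Proof.
by have := hH 1; rewrite !big_ord_recl big_ord0 /gdenom_coef /= mul1r mul0r !addr0.
Qed.

Lemma Hgen2 : H 2 = -1.
Proof.
have := hH 2; rewrite !big_ord_recl big_ord0 /gdenom_coef /= Hgen0.
by rewrite mul0r add0r !mul1r addr0 => /eqP; rewrite addr_eq0 => /eqP.
Qed.

Lemma HgenS3 k : H k.+3 = - H k.+1 - 'X * H k.
Proof.
have := hH k.+3; rewrite !big_ord_recl big1 => [|i _]; last by rewrite /gdenom_coef mul0r.
rewrite /gdenom_coef /= !subSS !subn0 mul1r mul0r add0r mul1r addr0.
by move=> /eqP; rewrite addr_eq0 opprD => /eqP.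
Qed.

Lemma Hgen_coef_odd m i : odd (m + i) -> (H m)`_i = 0.
Proof.
elim/ltn_ind: m i => -[|[|[|k]]] IH i.
- by rewrite Hgen0 coef1; case: i.
- by rewrite Hgen1 coef0.
- by rewrite Hgen2 coefN coef1; case: i => // i; rewrite oppr0.
rewrite HgenS3 coefB coefXM coefN => hodd.
rewrite (IH k.+1) ?oppr0 ?sub0r //; last by move: hodd; rewrite !addSn /= negbK.
case: i hodd => [|i] hodd; first by rewrite oppr0.
by rewrite /= (IH k) ?oppr0 //; move: hodd; rewrite addnS !addSn /= !negbK => *; lia.
Qed.

Lemma Hgen_size m : (3 * size (H m) <= m + 3)%N.
Proof.
elim/ltn_ind: m => -[|[|[|k]]] IH.
- by rewrite Hgen0 size_poly1.
- by rewrite Hgen1 size_poly0.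
- by rewrite Hgen2 size_polyN size_poly1.
have hX : (size ('X * H k)%R <= (size (H k)).+1)%N.
  have [->|nz] := eqVneq (H k) 0; first by rewrite mulr0 size_poly0.
  by rewrite mulrC size_mulX.
have hS : (size (H k.+3) <= maxn (size (H k.+1)) (size (H k)).+1)%N.
  rewrite HgenS3; apply: leq_trans (size_polyD _ _) _.
  by rewrite !size_polyN geq_max leq_maxl (leq_trans hX) ?leq_maxr.
move: hS (IH k.+1 (ltnW (ltnSn _))) (IH k (ltnW (ltnW (ltnSn _)))); clear; lia.
Qed.

Lemma Hgen_deg_parity m : H m != 0 -> ~~ odd (m + (size (H m)).-1).
Proof.
move=> nz; apply/negP => /Hgen_coef_odd.
by rewrite -lead_coefE; apply/eqP; rewrite lead_coef_eq0.
Qed.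

End Recurrence.

Lemma rec3_uniq (F : pzRingType) (z : F) (a b : nat -> F) :
  a 0%N = b 0%N -> a 1%N = b 1%N -> a 2%N = b 2%N ->
  (forall k, a k.+3 = - a k.+1 - z * a k) ->
  (forall k, b k.+3 = - b k.+1 - z * b k) -> a =1 b.
Proof.
move=> e0 e1 e2 ra rb; elim/ltn_ind => -[|[|[|k]]] IH //.
by rewrite ra rb !IH // ltnS ?leqW.
Qed.

Section Evaluation.
Context {H : nat -> {poly int}} (hH : is_Hgen H) {F : comNzRingType} (z : F).

Local Notation h m := (map_poly intr (H m) : {poly F}).[z].

Lemma horner_HgenS3 k : h k.+3 = - h k.+1 - z * h k.
Proof.
rewrite (HgenS3 hH) rmorphB rmorphN rmorphM /= map_polyX.
by rewrite hornerD !hornerN hornerM hornerX mulrC.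
Qed.

(* The characteristic polynomial l^3 + l + z of the recurrence factors as
   (l - r) (l^2 + r l + rho2) when rho2 = 1 + r^2 and z = - r rho2, so h m is a
   combination of r ^+ m and of any solution V of the second order recurrence. *)
Lemma horner_Hgen_split (r rho2 s : F) (V : nat -> F) :
  rho2 = 1 + r ^+ 2 -> z = - r * rho2 -> V 0%N = s -> V 1%N = - r * s ->
  (forall k, V k.+2 = - r * V k.+1 - rho2 * V k) ->
  forall m, (rho2 + 2 * r ^+ 2) * s * h m = rho2 * V m - r * V m.+1 + r ^+ m.+2 * s.
Proof.
move=> hrho hz v0 v1 vS; apply: (@rec3_uniq _ z).
- by rewrite (Hgen0 hH) rmorph1 hornerC v1 v0 hrho; ring.
- by rewrite (Hgen1 hH) rmorph0 hornerC ?vS v1 v0 hrho; ring.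
- by rewrite (Hgen2 hH) rmorphN1 hornerN hornerC ?vS v1 v0 hrho; ring.
- by move=> k; rewrite horner_HgenS3; ring.
- by move=> k; rewrite ?vS !exprS hz hrho; ring.
Qed.

End Evaluation.

Lemma cubic_surj (F : rcfType) (t : F) : exists s, s ^+ 3 + s = t.
Proof.
pose p := 'X^3 + 'X - t%:P; have pE c : p.[c] = c ^+ 3 + c - t by rewrite !hornerE.
have /andP[tl tu] : - `|t| <= t <= `|t| by rewrite -ler_norml.
have b3 : 0 <= (`|t| + 1) ^+ 3 by rewrite exprn_ge0 // addr_ge0.
have ab : - (`|t| + 1) <= `|t| + 1 by lra.
have : p.[- (`|t| + 1)] <= 0 <= p.[`|t| + 1].
  by rewrite !pE exprNn; apply/andP; split; lra.
case/(poly_ivt ab) => s _ rs.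
by exists s; apply/eqP; rewrite -subr_eq0 -pE.
Qed.

Section Parametrisation.
Context {R : realType}.
Implicit Types (y f : R).

Definition rho y := Num.sqrt (1 - 4 * y ^+ 2)^-1.
Definition zeta y := 2 * y * rho y ^+ 3.

Lemma rho_spec {y} : `|2 * y| < 1 -> 0 < rho y /\ rho y ^+ 2 * (1 - 4 * y ^+ 2) = 1.
Proof.
move=> hy; have hp : 0 < 1 - 4 * y ^+ 2.
  by move: hy; rewrite ltr_norml => /andP[h1 h2]; nra.
split; first by rewrite sqrtr_gt0 invr_gt0.
by rewrite sqr_sqrtr ?invr_ge0 ?ltW // mulVf // gt_eqF.
Qed.

Lemma sin_pimulrn j : sin (pi *+ j) = 0 :> R.
Proof. by elim: j => [|j IH]; rewrite ?mulr0n ?sin0 // mulrSr sinDpi IH oppr0. Qed.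

Lemma cos_pimulrn j : cos (pi *+ j) = (-1) ^+ j :> R.
Proof. by elim: j => [|j IH]; rewrite ?mulr0n ?cos0 // mulrSr cosDpi IH exprS mulN1r. Qed.

Lemma rhoN y : rho (- y) = rho y.
Proof. by rewrite /rho sqrrN. Qed.

Lemma zetaN y : zeta (- y) = - zeta y.
Proof. by rewrite /zeta rhoN mulrN mulNr. Qed.

Lemma zeta_gt0 {y} : 0 < y -> `|2 * y| < 1 -> 0 < zeta y.
Proof. by move=> y0 /rho_spec[rh0 _]; rewrite !mulr_gt0 // exprn_gt0. Qed.

Lemma zeta_ltr_nneg a b : 0 <= a -> a < b -> `|2 * b| < 1 -> zeta a < zeta b.
Proof.
move=> a0 ab hb; have b0 : 0 < b by apply: le_lt_trans ab.
have ha : `|2 * a| < 1.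
  by move: hb; rewrite !ger0_norm ?mulr_ge0 ?(ltW b0) //; lra.
have [rha ea] := rho_spec ha; have [rhb eb] := rho_spec hb.
have rab : rho a <= rho b.
  have pa : 0 < 1 - 4 * a ^+ 2 by rewrite -(pmulr_rgt0 _ (exprn_gt0 2 rha)) ea.
  have pb : 0 < 1 - 4 * b ^+ 2 by rewrite -(pmulr_rgt0 _ (exprn_gt0 2 rhb)) eb.
  rewrite /rho ler_sqrt ?invr_ge0 ?ltW // ltf_pV2 ?posrE //; nra.
rewrite /zeta -!mulrA ltr_pM2l //.
apply: le_lt_trans (ler_wpM2l a0 (lerXn2r 3 _ _ rab)) _; rewrite ?nnegrE ?ltW //.
by rewrite ltr_pM2r // exprn_gt0.
Qed.

Lemma zeta_ltr a b : `|2 * a| < 1 -> `|2 * b| < 1 -> a < b -> zeta a < zeta b.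
Proof.
move=> ha hb ab; have [a0|a0] := leP 0 a; first exact: zeta_ltr_nneg.
have [b0|b0] := leP b 0.
  rewrite -ltrN2 -!zetaN zeta_ltr_nneg ?oppr_ge0 ?ltrN2 //.
  by rewrite mulrN normrN.
have := zeta_gt0 b0 hb; have := @zeta_gt0 (- a); rewrite zetaN mulrN normrN.
by rewrite !oppr_gt0 => /(_ a0 ha); lra.
Qed.

Lemma zeta_surj t : exists2 y, `|2 * y| < 1 & zeta y = t.
Proof.
have [s <-] := cubic_surj _ t; pose S := Num.sqrt (1 + s ^+ 2).
have S0 : 0 < S by rewrite sqrtr_gt0 ltr_wpDr ?sqr_ge0.
have S2 : s ^+ 2 = S ^+ 2 - 1 by rewrite sqr_sqrtr ?addr_ge0 ?sqr_ge0 //; ring.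
have e2y : 2 * (s / (2 * S)) = s / S by field; rewrite gt_eqF.
exists (s / (2 * S)).
  rewrite e2y normrM normfV (gtr0_norm S0) ltr_pdivrMr // mul1r.
  by rewrite -sqrtr_sqr ltr_sqrt ?ltrDr // ltr_wpDr ?sqr_ge0.
have hrho : rho (s / (2 * S)) = S.
  rewrite /rho; have -> : 1 - 4 * (s / (2 * S)) ^+ 2 = (S ^+ 2)^-1.
    have -> : 4 * (s / (2 * S)) ^+ 2 = (s / S) ^+ 2 by rewrite -e2y; ring.
    by rewrite expr_div_n S2; field; rewrite gt_eqF.
  by rewrite invrK sqrtr_sqr gtr0_norm.
by rewrite /zeta hrho e2y [s ^+ 3]exprS S2; field; rewrite gt_eqF.
Qed.

End Parametrisation.

Section Angles.
Context {R : realType}.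
Implicit Types (f g : R).

Lemma cos_pi3 : cos (pi / 3) = 2^-1 :> R.
Proof.
set c := cos (pi / 3); have p0 := pi_gt0 R.
have c0 : 0 < c by apply: cos_gt0_pihalf; apply/andP; split; lra.
have h : c ^+ 2 *+ 2 - 1 = - c.
  rewrite -cos_mulr2n (_ : pi / 3 *+ 2 = pi - pi / 3) ?mulr2n; last lra.
  by rewrite cosB cospi sinpi /c; ring.
have : (c + 1) * (2 * c - 1) = 0 by rewrite -[RHS](subrr (- c)) -{1}h; ring.
by move/eqP; rewrite mulf_eq0 => /orP[/eqP|/eqP]; lra.
Qed.

Lemma cos_2pi3 : cos (pi *+ 2 / 3) = - 2^-1 :> R.
Proof.
rewrite (_ : pi *+ 2 / 3 = pi - pi / 3); last by rewrite mulr2n; lra.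
by rewrite cosB cospi sinpi cos_pi3; ring.
Qed.

Lemma third_cosE f : f \in `[0, pi] ->
  (pi / 3 < f < pi *+ 2 / 3) = (`|2 * cos f| < 1).
Proof.
move=> hf; have p0 := pi_gt0 R.
have i1 : pi / 3 \in `[0, pi :> R] by rewrite in_itv /=; apply/andP; split; lra.
have i2 : pi *+ 2 / 3 \in `[0, pi :> R] by rewrite in_itv /=; apply/andP; split; lra.
rewrite -(ltr_cos i1 hf) -(ltr_cos hf i2) cos_pi3 cos_2pi3 ltr_norml.
by apply/idP/idP => /andP[h1 h2]; apply/andP; split; lra.
Qed.

Lemma third_in_0pi {f} : pi / 3 < f < pi *+ 2 / 3 -> f \in `[0, pi].
Proof. by have := pi_gt0 R; rewrite in_itv /= => p0 /andP[h1 h2]; apply/andP; lra. Qed.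

Lemma third_cos {f} : pi / 3 < f < pi *+ 2 / 3 -> `|2 * cos f| < 1.
Proof. by move=> hf; rewrite -third_cosE ?third_in_0pi. Qed.

Lemma zeta_cos_ltr {f g} : pi / 3 < f -> f < g -> g < pi *+ 2 / 3 ->
  zeta (cos g) < zeta (cos f).
Proof.
move=> hf fg hg; have hf' : pi / 3 < f < pi *+ 2 / 3 by apply/andP; lra.
have hg' : pi / 3 < g < pi *+ 2 / 3 by apply/andP; lra.
by rewrite zeta_ltr ?third_cos // ltr_cos ?third_in_0pi.
Qed.

Lemma zeta_cos_surj (t : R) : exists2 f, pi / 3 < f < pi *+ 2 / 3 & zeta (cos f) = t.
Proof.
have [y hy <-] := zeta_surj t.
have iy : -1 <= y <= 1 by move: hy; rewrite ltr_norml => /andP[y1 y2]; apply/andP; lra.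
have ia : acos y \in `[0, pi] by rewrite in_itv /= acos_ge0 ?acos_lepi.
by exists (acos y); rewrite ?third_cosE // acosK ?in_itv.
Qed.

End Angles.

Section SignPattern.
Context {R : realType} {H : nat -> {poly int}} (hH : is_Hgen H) (f : R).
Hypothesis hf : pi / 3 < f < pi *+ 2 / 3.

Local Notation rh := (rho (cos f)).
Local Notation r := (- 2 * rho (cos f) * cos f).
Local Notation h m := (map_poly intr (H m) : {poly R}).[zeta (cos f)].

(* As r = - 2 rho cos f, the roots of l^2 + r l + rho^2 are rho e^(+-if). *)
Lemma horner_Hgen_sin m :
  (rh ^+ 2 + 2 * r ^+ 2) * sin f * h m =
  rh ^+ 2 * (rh ^+ m * sin (f *+ m.+1)) - r * (rh ^+ m.+1 * sin (f *+ m.+2))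
  + r ^+ m.+2 * sin f.
Proof.
have [_ rhE] := rho_spec (third_cos hf).
apply: (horner_Hgen_split hH _ _ _ _ (fun k => rh ^+ k * sin (f *+ k.+1))) => [||||k].
- by transitivity (rh ^+ 2 * (1 - 4 * cos f ^+ 2) + r ^+ 2); [ring | rewrite rhE].
- by rewrite /zeta; ring.
- by rewrite expr0 mul1r mulr1n.
- by rewrite expr1 sin_mulr2n mulr2n; ring.
rewrite [f *+ k.+3]mulrSr (_ : f *+ k.+1 = f *+ k.+2 - f); last first.
  by rewrite [f *+ k.+2]mulrSr addrK.
by rewrite sinD sinB !exprS; ring.
Qed.

(* At a grid angle sin ((m+2) f) vanishes, and since |r| < rho the term
   rho^(m+2) fixes the sign. *)
Lemma Hgen_sign_at m j : f *+ m.+2 = pi *+ j -> 0 < (-1) ^+ j.+1 * h m.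
Proof.
move=> fN; have [rh0 _] := rho_spec (third_cos hf).
have s0 : 0 < sin f.
  by apply: sin_gt0_pi; have := pi_gt0 R; case/andP: hf => h1 h2 p0; apply/andP; lra.
have hr : `|r| < rh.
  have := third_cos hf; rewrite !normrM normrN (gtr0_norm rh0); nra.
have hrX : `|r ^+ m.+2| < rh ^+ m.+2 by rewrite normrX ltrXn2r.
have := horner_Hgen_sin m; rewrite fN sin_pimulrn.
rewrite (_ : f *+ m.+1 = pi *+ j - f); last by rewrite -fN [f *+ m.+2]mulrSr addrK.
rewrite sinB sin_pimulrn cos_pimulrn => E.
have pos : 0 < (rh ^+ 2 + 2 * r ^+ 2) * sin f.
  by rewrite mulr_gt0 // ltr_pwDl ?exprn_gt0 // mulr_ge0 ?sqr_ge0.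
rewrite -(pmulr_rgt0 _ pos) mulrCA E exprS -signr_odd.
have eP : rh ^+ 2 * rh ^+ m = rh ^+ m.+2 by rewrite -exprD add2n.
move: hrX; rewrite ltr_norml => /andP[h1 h2].
by case: (odd j); rewrite ?expr0 ?expr1 mulrA eP; nra.
Qed.

End SignPattern.

Lemma alt_sign_mul_lt0 (F : realDomainType) (j : nat) (a b : F) :
  0 < (-1) ^+ j.+1 * a -> 0 < (-1) ^+ j.+2 * b -> a * b < 0.
Proof. by rewrite !exprS -signr_odd; case: (odd j); rewrite ?expr0 ?expr1; nra. Qed.

Section Grid.
Context {R : realType}.

Definition grid (m j : nat) : R := pi *+ j / m.+2%:R.

Lemma grid_mulrn m j : grid m j *+ m.+2 = pi *+ j.
Proof. by rewrite -mulr_natr divfK ?pnatr_eq0. Qed.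

Lemma grid_ltS m j : grid m j < grid m j.+1.
Proof. by rewrite /grid [pi *+ j.+1]mulrSr mulrDl ltrDl divr_gt0 ?pi_gt0. Qed.

Lemma grid_third m j : (m.+2 < 3 * j)%N -> (3 * j < 2 * m.+2)%N ->
  pi / 3 < grid m j < pi *+ 2 / 3.
Proof.
move=> h1 h2; have p0 := pi_gt0 R; have N0 : 0 < m.+2%:R :> R by rewrite ltr0n.
have {}h1 : m.+2%:R < 3 * j%:R :> R by rewrite -natrM ltr_nat.
have {}h2 : 3 * j%:R < 2 * m.+2%:R :> R by rewrite -!natrM ltr_nat.
have gN : grid m j * m.+2%:R = pi * j%:R by rewrite mulr_natr grid_mulrn mulr_natr.
rewrite mulr2n; apply/andP; split; nra.
Qed.

End Grid.

Lemma Hgen_grid_sign_change {R : realType} {H : nat -> {poly int}} (hH : is_Hgen H)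
    {m j : nat} :
  pi / 3 < grid m j :> R -> grid m j.+1 < pi *+ 2 / 3 :> R ->
  (map_poly intr (H m) : {poly R}).[zeta (cos (grid m j))] *
  (map_poly intr (H m) : {poly R}).[zeta (cos (grid m j.+1))] < 0.
Proof.
move=> h1 h2; have h12 := @grid_ltS R m j.
by apply: (@alt_sign_mul_lt0 _ j); apply: (Hgen_sign_at hH) (grid_mulrn m _);
  apply/andP; split; lra.
Qed.

Lemma rcf_sign_changes_roots (F : rcfType) (p : {poly F}) (x : nat -> F) (e : nat) :
  (forall i, (i < e)%N -> x i.+1 < x i) ->
  (forall i, (i < e)%N -> p.[x i] * p.[x i.+1] < 0) ->
  exists rs : seq F,
    [/\ size rs = e, uniq rs, all (root p) rs & all (fun r => x e < r) rs].
Proof.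
elim: e => [|e IH] hdec hsg; first by exists [::].
have [rs [se u ar ax]] := IH (fun i hi => hdec i (ltnW hi)) (fun i hi => hsg i (ltnW hi)).
have hs : p.[x e.+1] * p.[x e] < 0 by rewrite mulrC hsg.
have [w] := poly_ivtoo (ltW (hdec _ (ltnSn _))) hs.
rewrite in_itv /= => /andP[w1 w2] rw.
exists (w :: rs); split => /=; [by rewrite se | | by rewrite rw ar |].
- rewrite u andbT; apply/negP => /(allP ax); rewrite ltNge => /negP; apply.
  exact: ltW.
- rewrite w1; apply/allP => r /(allP ax); apply: lt_trans; exact: hdec.
Qed.

Lemma pos_lower_bound (F : realFieldType) (f : nat -> F) (e : nat) :
  (forall i, (i < e)%N -> 0 < f i) ->
  exists2 d : F, 0 < d & forall i, (i < e)%N -> d <= f i.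
Proof.
elim: e => [|e IH] hf; first by exists 1.
have [d d0 hd] := IH (fun i hi => hf i (ltnW hi)).
exists (Num.min d (f e)) => [|i]; first by rewrite lt_min d0 hf.
rewrite ltnS leq_eqVlt => /orP[/eqP ->|hi]; first by rewrite ge_min lexx orbT.
by rewrite ge_min hd.
Qed.

Lemma rat_approx_sign {R : realType} {p : {poly R}} {x d : R} :
  p.[x] != 0 -> 0 < d ->
  exists q : rat, (`|ratr q - x| < d) && (0 < p.[ratr q] * p.[x]).
Proof.
move=> px d0; have px0 : 0 < `|p.[x]| by rewrite normr_gt0.
have [d1 d10 hd1] := poly_cont x p px0.
have d20 : 0 < Num.min d d1 by rewrite lt_min d0 d10.
have [q] := @rat_in_itvoo R (x - Num.min d d1) (x + Num.min d d1) ltac:(lra).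
rewrite in_itv /= => /andP[q1 q2].
have hq : `|ratr q - x| < Num.min d d1 by rewrite ltr_norml; apply/andP; split; lra.
move: (hq); rewrite lt_min => /andP[hqd /hd1]; rewrite ltr_norml.
have [p0|p0] := ltrP 0 p.[x]; rewrite ?(gtr0_norm p0) ?(ler0_norm p0) => /andP[h1 h2].
  by exists q; rewrite hqd; nra.
by exists q; rewrite hqd; nra.
Qed.

(* The sign changes are moved to rational points, where the intermediate value
   theorem can be used in the real algebraic numbers algR, a subfield of algC. *)
Lemma rat_sign_changes {R : realType} {P : {poly rat}} {x : nat -> R} {e : nat} :
  (forall i, (i < e)%N -> x i.+1 < x i) ->
  (forall i, (i < e)%N -> (map_poly ratr P).[x i] * (map_poly ratr P).[x i.+1] < 0) ->
  exists q : nat -> rat,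
    (forall i, (i < e)%N -> q i.+1 < q i) /\
    (forall i, (i < e)%N -> P.[q i] * P.[q i.+1] < 0).
Proof.
set p := map_poly ratr P; case: e => [|e] hdec hsg; first by exists (fun=> 0).
have pE q : p.[ratr q] = ratr P.[q] by rewrite horner_map.
have hnz i : (i <= e.+1)%N -> p.[x i] != 0.
  rewrite leq_eqVlt => /orP[/eqP ->|/hsg].
    by have := hsg e (ltnSn _); apply: contraTneq => ->; rewrite mulr0 ltxx.
  by apply: contraTneq => ->; rewrite mul0r ltxx.
have [d d0 hd] := @pos_lower_bound R (fun i => x i - x i.+1) e.+1
  (fun i hi => ltac:(by rewrite subr_gt0 hdec)).
have d20 : 0 < d / 2 by rewrite divr_gt0.
have ex i : exists q : rat,
    (i <= e.+1)%N ==> (`|ratr q - x i| < d / 2) && (0 < p.[ratr q] * p.[x i]).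
  have [ie|_] := boolP (i <= e.+1)%N; last by exists 0.
  by have [q hq] := rat_approx_sign (hnz i ie) d20; exists q.
pose q i := xchoose (ex i).
have qP i : (i <= e.+1)%N ->
    (`|ratr (q i) - x i| < d / 2) && (0 < p.[ratr (q i)] * p.[x i]).
  by move=> ie; apply: (implyP (xchooseP (ex i))).
exists q; split => i ie.
- have := hd i ie; case/andP: (qP i (ltnW ie)) => + _; case/andP: (qP i.+1 ie) => + _.
  by rewrite !ltr_norml -(ltr_rat R) => /andP[? ?] /andP[? ?] ?; lra.
- case/andP: (qP i (ltnW ie)) => _; case/andP: (qP i.+1 ie) => _.
  have := hsg i ie; rewrite !pE -(ltrq0 R) rmorphM /=; nra.
Qed.

Lemma map_poly_ratr_intr (F : numFieldType) (p : {poly int}) :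
  map_poly ratr (map_poly intr p : {poly rat}) = map_poly intr p :> {poly F}.
Proof. by rewrite -map_poly_comp; apply: eq_map_poly => c /=; rewrite ratr_int. Qed.

Lemma zeros_real_of_algR_roots (p : {poly int}) (rs : seq algR) :
  size rs = (size p).-1 -> uniq rs -> all (root (map_poly intr p)) rs ->
  zeros_real p.
Proof.
move=> rsz rsu rsr; have [->|p0] := eqVneq p 0; [by left | right => z rz].
pose pC : {poly algC} := map_poly intr p.
have pCE : pC = map_poly algRval (map_poly intr p).
  by rewrite -map_poly_comp; apply: eq_map_poly => c /=; rewrite rmorph_int.
have szC : size pC = (size p).-1.+1.
  by rewrite size_map_inj_poly ?prednK ?size_poly_gt0 //; exact: intr_inj.
have := @max_poly_roots _ pC (z :: map algRval rs).
rewrite -size_poly_gt0 szC /= size_map rsz ltnn rz /=.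
have -> : all (root pC) (map algRval rs).
  by apply/allP => _ /mapP[r /(allP rsr) rr ->]; rewrite pCE fmorph_root.
rewrite (map_inj_uniq val_inj) rsu andbT => /(_ isT isT) hz.
apply: contraT => zn; apply: hz; apply/negP => /mapP[r _ zr].
by move: zn; rewrite zr algRvalP.
Qed.

Lemma zeros_real_of_sign_changes (R : realType) (p : {poly int}) (x : nat -> R) :
  (forall i, (i < (size p).-1)%N -> x i.+1 < x i) ->
  (forall i, (i < (size p).-1)%N ->
     (map_poly intr p : {poly R}).[x i] * (map_poly intr p : {poly R}).[x i.+1] < 0) ->
  zeros_real p.
Proof.
rewrite -map_poly_ratr_intr => hdec hsg.
have [q [qdec qsg]] := rat_sign_changes hdec hsg.
pose pA : {poly algR} := map_poly intr p.
have hA i : pA.[ratr (q i)] = ratr (map_poly intr p).[q i].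
  by rewrite /pA -(map_poly_ratr_intr algR) horner_map.
have [rs [? ? ? _]] := @rcf_sign_changes_roots _ pA (ratr \o q) (size p).-1
  (fun i ie => ltac:(by rewrite ltr_rat qdec))
  (fun i ie => ltac:(by rewrite /= !hA -rmorphM ltrq0 qsg)).
exact: (@zeros_real_of_algR_roots _ rs).
Qed.

Lemma grid_between (R : realType) (a b : R) : 0 <= a -> a < b ->
  exists m j, a < grid m j /\ grid m j.+1 < b.
Proof.
move=> a0 ab; have p0 := pi_gt0 R; have d0 : 0 < b - a by rewrite subr_gt0.
pose m := Num.truncn (pi *+ 2 / (b - a)); pose N : R := m.+2%:R.
have N0 : 0 < N by rewrite ltr0n.
have hN : pi *+ 2 < (b - a) * N.
  rewrite mulrC -ltr_pdivrMr //; apply: lt_trans (truncnS_gt _) _.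
  by rewrite ltr_nat.
have aN0 : 0 <= a * N / pi by rewrite divr_ge0 ?mulr_ge0 ?(ltW N0) ?(ltW p0).
pose k := Num.truncn (a * N / pi).
have /andP[k1 k2] : k%:R <= a * N / pi < k.+1%:R := truncn_itv aN0.
exists m, k.+1; have gE n : grid m n * N = pi * n%:R.
  by rewrite /N mulr_natr grid_mulrn mulr_natr.
have := gE k.+1; have := gE k.+2; rewrite -[k.+2]addn1 -[k.+1]addn1 !natrD.
rewrite ltr_pdivrMr // in k2; rewrite ler_pdivlMr // in k1.
move: hN; rewrite mulr2n; split; nra.
Qed.

Section Zeros.
Context {H : nat -> {poly int}} (hH : is_Hgen H).

Lemma Hgen_zeros_real m : zeros_real (H m).
Proof.
have [->|nz] := eqVneq (H m) 0; first by left.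
(* the first grid index above (m+2)/3; the parity of m + deg (H m) keeps the
   last of the deg (H m) + 1 angles used below 2 pi/3 *)
pose a := (m.+2 %/ 3).+1.
have hthird i : (i <= (size (H m)).-1)%N ->
    pi / 3 < (grid m (a + i) : Rdefinitions.R) < pi *+ 2 / 3.
  move=> ie; have := Hgen_size hH m; have := Hgen_deg_parity hH _ nz.
  have : (0 < size (H m))%N by rewrite size_poly_gt0.
  move: ie; rewrite /a; clear; move=> *; apply: grid_third; lia.
apply: (@zeros_real_of_sign_changes _ _ (fun i => zeta (cos (grid m (a + i))))) => i ie.
- have /andP[h1 _] := hthird i (ltnW ie); have /andP[_ h2] := hthird i.+1 ie.
  by rewrite addnS; apply: zeta_cos_ltr h1 (grid_ltS _ _) _; rewrite -addnS.
- have /andP[h1 _] := hthird i (ltnW ie); have /andP[_ h2] := hthird i.+1 ie.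
  by rewrite addnS; apply: Hgen_grid_sign_change; rewrite // -addnS.
Qed.

Lemma Hgen_zeros_dense (R : realType) (x eps : R) : 0 < eps ->
  exists m (y : R), H m != 0 /\ root (map_poly intr (H m)) y /\ `|y - x| < eps.
Proof.
move=> e0; have p0 := pi_gt0 R.
have [f1 /andP[f1l f1u] z1] := zeta_cos_surj (x - eps / 2).
have [f2 /andP[f2l f2u] z2] := zeta_cos_surj (x + eps / 2).
have f21 : f2 < f1.
  rewrite ltNge le_eqVlt; apply/negP => /orP[/eqP e|f12]; first by move: z1; rewrite e z2; lra.
  by have := zeta_cos_ltr f1l f12 f2u; rewrite z1 z2; lra.
have [m [j [g1 g2]]] := grid_between _ _ _ (ltW (lt_trans (divr_gt0 p0 (ltr0Sn _ 2)) f2l)) f21.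
have [gl gu] : pi / 3 < grid m j :> R /\ grid m j.+1 < pi *+ 2 / 3 :> R by split; lra.
have hs := Hgen_grid_sign_change hH gl gu.
rewrite mulrC in hs; have [w] := poly_ivtoo (ltW (zeta_cos_ltr gl (grid_ltS m j) gu)) hs.
rewrite in_itv /= => /andP[w1 w2] rw; exists m, w; split; last split => //.
  by apply: contraTneq hs => ->; rewrite rmorph0 horner0 mul0r ltxx.
have gS := @grid_ltS R m j.
have := @zeta_cos_ltr _ f2 (grid m j) f2l g1 ltac:(lra).
have := @zeta_cos_ltr _ (grid m j.+1) f1 ltac:(lra) g2 f1u.
by rewrite z1 z2 ltr_norml => ? ?; apply/andP; split; lra.
Qed.

End Zeros.

Theorem theorem3p1 (H : nat -> {poly int}) (hH : is_Hgen H) :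
  (forall m : nat, zeros_real (H m)) /\
  (forall (R : realType) (x eps : R), 0 < eps ->
     exists (m : nat) (y : R),
       H m != 0 /\ root (map_poly intr (H m)) y /\ `|y - x| < eps).
Proof. by split; [exact: Hgen_zeros_real | exact: Hgen_zeros_dense]. Qed.
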